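(* Let $\vec A=(A_0,A_1)$, $\vec B=(B_0,B_1)$ be Banach couples and let $T:\vec A\to\vec B$ be an operator such that $T|_{A_j}:A_j\to B_j$ is invertible for $j=0,1$. Then the following are equivalent: (i) $(T|_{A_0})^{-1}y=(T|_{A_1})^{-1}y$ for all $y\in B_0\cap B_1$; (ii) $T:A_0+A_1\to B_0+B_1$ is invertible; (iii) for every interpolation functor $G$, the restriction $T|_{G(\vec A)}:G(\vec A)\to G(\vec B)$ is invertible.
   Context: An operator $T:\vec A\to\vec B$ between Banach couples is a linear map $A_0+A_1\to B_0+B_1$ whose restrictions are bounded $A_j\to B_j$. An interpolation functor $G$ assigns to each Banach couple $\vec A$ a Banach space $G(\vec A)$ with $A_0\cap A_1\subset G(\vec A)\subset A_0+A_1$ (continuously) such that every operator $T:\vec A\to\vec B$ maps $G(\vec A)$ boundedly into $G(\vec B)$. *)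

From HB Require Import structures.
From mathcomp Require Import all_boot all_order all_algebra.
From mathcomp Require Import boolp classical_sets reals.
Unset Implicit Arguments. Unset Strict Implicit. Unset Printing Implicit Defensive.
Import Order.TTheory GRing.Theory Num.Theory.
Local Open Scope ring_scope.
Local Open Scope classical_set_scope.

Section BanachCouples.
Variable R : realType.

Definition is_subspace (V : lmodType R) (A : set V) :=
  [/\ A 0, (forall x y, A x -> A y -> A (x + y))
     & (forall (k : R) x, A x -> A (k *: x))].

Definition is_norm_on (V : lmodType R) (A : set V) (n : V -> R) :=
  [/\ (forall x, A x -> 0 <= n x),
      (forall x, A x -> n x = 0 -> x = 0),
      (forall (k : R) x, A x -> n (k *: x) = `|k| * n x)
    & (forall x y, A x -> A y -> n (x + y) <= n x + n y)].

Definition is_complete_on (V : lmodType R) (A : set V) (n : V -> R) :=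
  forall u : nat -> V, (forall k, A (u k)) ->
    (forall e : R, 0 < e -> exists N, forall p q, (N <= p)%N -> (N <= q)%N ->
        n (u p - u q) < e) ->
    exists l, A l /\ (forall e : R, 0 < e -> exists N, forall p, (N <= p)%N ->
        n (u p - l) < e).

Definition is_Banach_on (V : lmodType R) (A : set V) (n : V -> R) :=
  [/\ is_subspace V A, is_norm_on V A n & is_complete_on V A n].

(* A Banach couple: two Banach spaces A0, A1 inside a common vector space,
   whose ambient space is their sum A0 + A1, and which are compatible
   (the sum functional is definite, i.e. A0 + A1 is Hausdorff). *)
Record couple := Couple {
  cV : lmodType R;
  cA0 : set cV;
  cA1 : set cV;
  cn0 : cV -> R;
  cn1 : cV -> R;
  cA0_Banach : is_Banach_on cV cA0 cn0;
  cA1_Banach : is_Banach_on cV cA1 cn1;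
  c_sum : forall v : cV, exists a0 a1, [/\ cA0 a0, cA1 a1 & v = a0 + a1];
  c_sep : forall v : cV,
      (forall e : R, 0 < e -> exists a0 a1,
          [/\ cA0 a0, cA1 a1, v = a0 + a1 & cn0 a0 + cn1 a1 < e]) -> v = 0
}.

Definition sum_norm (C : couple) (v : cV C) : R :=
  inf [set r | exists a0 a1,
         [/\ cA0 C a0, cA1 C a1, v = a0 + a1 & r = cn0 C a0 + cn1 C a1]].

Definition cap_set (C : couple) : set (cV C) := cA0 C `&` cA1 C.
Definition cap_norm (C : couple) (v : cV C) : R := Num.max (cn0 C v) (cn1 C v).

Definition bounded_between (V W : lmodType R) (X : set V) (nX : V -> R)
    (Y : set W) (nY : W -> R) (f : V -> W) :=
  (forall x, X x -> Y (f x)) /\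
  exists c : R, forall x, X x -> nY (f x) <= c * nX x.

Definition invertible_between (V W : lmodType R) (X : set V) (nX : V -> R)
    (Y : set W) (nY : W -> R) (f : V -> W) :=
  [/\ bounded_between V W X nX Y nY f,
      (forall x y, X x -> X y -> f x = f y -> x = y),
      (forall y, Y y -> exists2 x, X x & f x = y)
    & exists c : R, forall x, X x -> nX x <= c * nY (f x)].

Definition operator (A B : couple) (T : {linear cV A -> cV B}) :=
  bounded_between _ _ (cA0 A) (cn0 A) (cA0 B) (cn0 B) T /\
  bounded_between _ _ (cA1 A) (cn1 A) (cA1 B) (cn1 B) T.

Record interp_functor := InterpFunctor {
  Gset : forall C : couple, set (cV C);
  Gnorm : forall C : couple, cV C -> R;
  G_Banach : forall C, is_Banach_on _ (Gset C) (Gnorm C);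
  G_cap : forall C, bounded_between _ _ (cap_set C) (cap_norm C) (Gset C) (Gnorm C) id;
  G_sum : forall C, bounded_between _ _ (Gset C) (Gnorm C) setT (sum_norm C) id;
  G_interp : forall (A B : couple) (T : {linear cV A -> cV B}), operator A B T ->
      bounded_between _ _ (Gset A) (Gnorm A) (Gset B) (Gnorm B) T
}.

End BanachCouples.

Arguments is_subspace {R V}. Arguments is_norm_on {R V}.
Arguments is_complete_on {R V}. Arguments is_Banach_on {R V}.
Arguments cV {R}. Arguments cA0 {R}. Arguments cA1 {R}.
Arguments cn0 {R}. Arguments cn1 {R}.
Arguments sum_norm {R}. Arguments cap_set {R}. Arguments cap_norm {R}.
Arguments bounded_between {R V W}. Arguments invertible_between {R V W}.
Arguments operator {R A B}.
Arguments Gset {R}. Arguments Gnorm {R}.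

From HB Require Import structures.
From mathcomp Require Import all_boot all_order all_algebra.
From mathcomp Require Import boolp classical_sets reals.
From mathcomp Require Import lra.
Set Implicit Arguments. Unset Strict Implicit. Unset Printing Implicit Defensive.
Import Order.TTheory GRing.Theory Num.Theory.
Local Open Scope ring_scope.
Local Open Scope classical_set_scope.

(* The common mechanism is: whenever T is a bijection of the ambient spaces,
   its linear inverse S is again an operator of couples B -> A, because on
   each B_j it coincides with the inverse of T|A_j.  Then
   - (i) -> (ii): (i) makes T injective on A0 + A1; it is onto since each
     T|A_j is; T and S are operators, hence bounded on the sums.
   - (ii) -> (iii): T and S are operators, so both are bounded on G(.).
   - (iii) -> (i): apply (iii) to the intersection functor A0 /\ A1, which
     we build first (its Banach property uses the compatibility of couples:
     a sequence cannot converge to two different limits in A0 and A1). *)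

Section NormedSubspaces.
Variables (R : realType) (V : lmodType R) (X : set V) (n : V -> R).

Lemma Banach_subspace : is_Banach_on X n -> is_subspace X.
Proof. by case. Qed.

Lemma Banach_norm : is_Banach_on X n -> is_norm_on X n.
Proof. by case. Qed.

Lemma subspaceN : is_subspace X -> forall x, X x -> X (- x).
Proof. by case=> _ _ XZ x Xx; rewrite -scaleN1r; apply: XZ. Qed.

Lemma norm_ge0 : is_norm_on X n -> forall x, X x -> 0 <= n x.
Proof. by case. Qed.

Lemma normN : is_norm_on X n -> forall x, X x -> n (- x) = n x.
Proof. by case=> _ _ nZ _ x Xx; rewrite -scaleN1r nZ // normrN normr1 mul1r. Qed.

Lemma norm_at0 : is_subspace X -> is_norm_on X n -> n 0 = 0.
Proof. by case=> X0 _ _ [_ _ nZ _]; have := nZ 0 0 X0; rewrite scale0r normr0 mul0r. Qed.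

End NormedSubspaces.

Lemma common_bound (R : realType) (c0 c1 : R) :
  exists2 M : R, 0 < M & c0 <= M /\ c1 <= M.
Proof.
exists (1 + `|c0| + `|c1|); first by have := normr_ge0 c0; have := normr_ge0 c1; lra.
by have := ler_norm c0; have := ler_norm c1; have := normr_ge0 c0;
  have := normr_ge0 c1; split; lra.
Qed.

Lemma ler_bound (R : realType) (c M n m : R) :
  0 <= n -> n <= m -> c <= M -> 0 <= M -> c * n <= M * m.
Proof.
move=> n0 nm cM M0; apply: le_trans (_ : M * n <= _).
  exact: ler_wpM2r.
exact: ler_wpM2l.
Qed.

Section Invertibility.
Variables (R : realType) (V W : lmodType R).
Variables (X : set V) (nX : V -> R) (Y : set W) (nY : W -> R).

Lemma id_bounded : bounded_between X nX X nX id.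
Proof. by split=> //; exists 1 => x _; rewrite mul1r. Qed.

Lemma invertible_of_inverse (f : V -> W) (g : W -> V) :
  bounded_between X nX Y nY f -> bounded_between Y nY X nX g ->
  cancel f g -> cancel g f -> invertible_between X nX Y nY f.
Proof.
move=> fB [gYX [e He]] fK gK; split=> //.
- by move=> x y _ _ /(congr1 g); rewrite !fK.
- by move=> y Yy; exists (g y); [exact: gYX | exact: gK].
- by exists e => x Xx; rewrite -{1}(fK x); apply: He; apply: fB.1.
Qed.

Lemma left_inverse_bounded (f : V -> W) (g : W -> V) :
  invertible_between X nX Y nY f -> cancel f g -> bounded_between Y nY X nX g.
Proof.
move=> [_ _ f_onto [d Hd]] fK; split.
  by move=> y /f_onto[x Xx <-]; rewrite fK.
by exists d => y /f_onto[x Xx <-]; rewrite fK; apply: Hd.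
Qed.

End Invertibility.

Section LinearInverse.
Variables (R : realType) (V W : lmodType R) (f : {linear V -> W}).
Hypotheses (f_inj : injective f) (f_surj : forall y, exists x, f x = y).

Definition inverse_fun (y : W) : V := xget 0 [set x | f x = y].

Lemma inverse_funK : cancel inverse_fun f.
Proof. by move=> y; exact: (xgetPex 0 (f_surj y)). Qed.

Lemma inverse_fun_linear : linear inverse_fun.
Proof. by move=> a u v; apply: f_inj; rewrite linearP !inverse_funK. Qed.

Definition linear_inverse : {linear W -> V} :=
  HB.pack inverse_fun (GRing.isLinear.Build _ _ _ _ inverse_fun inverse_fun_linear).

Lemma linear_inverseK : cancel linear_inverse f.
Proof. exact: inverse_funK. Qed.

Lemma linear_inverseKV : cancel f linear_inverse.
Proof. by move=> x; apply: f_inj; rewrite linear_inverseK. Qed.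

End LinearInverse.

Section SumAndIntersection.
Variable R : realType.

Definition decomp_norms (C : couple R) (v : cV C) : set R :=
  [set r | exists a0 a1,
     [/\ cA0 C a0, cA1 C a1, v = a0 + a1 & r = cn0 C a0 + cn1 C a1]].

Lemma decomp_norms_ge0 (C : couple R) (v : cV C) : lbound (decomp_norms v) 0.
Proof.
move=> r [a0 [a1 [A0 A1 _ ->]]]; apply: addr_ge0.
  exact: (norm_ge0 (Banach_norm (cA0_Banach _ C))).
exact: (norm_ge0 (Banach_norm (cA1_Banach _ C))).
Qed.

Lemma sum_norm_le_decomp (C : couple R) (a0 a1 : cV C) :
  cA0 C a0 -> cA1 C a1 -> sum_norm C (a0 + a1) <= cn0 C a0 + cn1 C a1.
Proof.
move=> A0 A1; apply: ge_inf; first by exists 0; apply: decomp_norms_ge0.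
by exists a0, a1.
Qed.

Lemma sum_norm_le (C D : couple R) (x : cV C) (y : cV D) (M : R) : 0 < M ->
  (forall b0 b1, cA0 D b0 -> cA1 D b1 -> y = b0 + b1 -> exists a0 a1,
     [/\ cA0 C a0, cA1 C a1, x = a0 + a1 &
         cn0 C a0 + cn1 C a1 <= M * (cn0 D b0 + cn1 D b1)]) ->
  sum_norm C x <= M * sum_norm D y.
Proof.
move=> M0 match_decomp; rewrite -ler_pdivrMl //; apply: lb_le_inf.
  have [b0 [b1 [B0 B1 ->]]] := c_sum _ D y.
  by exists (cn0 D b0 + cn1 D b1), b0, b1.
move=> r [b0 [b1 [B0 B1 yE ->]]].
have [a0 [a1 [A0 A1 -> Hle]]] := match_decomp b0 b1 B0 B1 yE.
by rewrite ler_pdivrMl //; apply: le_trans Hle; apply: sum_norm_le_decomp.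
Qed.

Lemma cn0_le_cap_norm (C : couple R) (v : cV C) : cn0 C v <= cap_norm C v.
Proof. by rewrite /cap_norm le_max lexx. Qed.

Lemma cn1_le_cap_norm (C : couple R) (v : cV C) : cn1 C v <= cap_norm C v.
Proof. by rewrite /cap_norm le_max lexx orbT. Qed.

(* Compatibility of the couple: limits in A0 and in A1 of the same sequence
   coincide, since their difference has arbitrarily small sum norm. *)
Lemma limits_agree (C : couple R) (u : nat -> cV C) (l0 l1 : cV C) :
  (forall k, cA0 C (u k)) -> (forall k, cA1 C (u k)) -> cA0 C l0 -> cA1 C l1 ->
  (forall e, 0 < e -> exists N, forall p, (N <= p)%N -> cn0 C (u p - l0) < e) ->
  (forall e, 0 < e -> exists N, forall p, (N <= p)%N -> cn1 C (u p - l1) < e) ->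
  l0 = l1.
Proof.
move=> uA0 uA1 L0 L1 lim0 lim1.
have [S0 N0 _] := cA0_Banach _ C; have [S1 _ _] := cA1_Banach _ C.
have [_ D0 _] := S0; have [_ D1 _] := S1.
apply/eqP; rewrite -subr_eq0; apply/eqP; apply: c_sep => e e0.
have e20 : 0 < e / 2 by rewrite divr_gt0.
have [N0' HN0] := lim0 _ e20; have [N1' HN1] := lim1 _ e20.
pose p := maxn N0' N1'.
have d0 : cA0 C (u p - l0) by apply: D0 => //; exact: subspaceN.
exists (- (u p - l0)), (u p - l1); split.
- exact: subspaceN.
- by apply: D1 => //; exact: subspaceN.
- by rewrite opprB addrA subrK.
- rewrite (normN N0) //.
  have := HN0 p (leq_maxl _ _); have := HN1 p (leq_maxr _ _); lra.
Qed.

Lemma cap_subspace (C : couple R) : is_subspace (cap_set C).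
Proof.
have [Z0 D0 S0] := Banach_subspace (cA0_Banach _ C).
have [Z1 D1 S1] := Banach_subspace (cA1_Banach _ C).
split; first by split.
- by move=> x y [? ?] [? ?]; split; [apply: D0 | apply: D1].
- by move=> k x [? ?]; split; [apply: S0 | apply: S1].
Qed.

Lemma cap_norm_on (C : couple R) : is_norm_on (cap_set C) (cap_norm C).
Proof.
have [N0 Df0 H0 Tr0] := Banach_norm (cA0_Banach _ C).
have [N1 _ H1 Tr1] := Banach_norm (cA1_Banach _ C).
split.
- by move=> x [a _]; apply: le_trans (cn0_le_cap_norm x); apply: N0.
- move=> x [a b] E; apply: Df0 => //; apply/eqP; rewrite eq_le N0 // andbT.
  by rewrite -E cn0_le_cap_norm.
- by move=> k x [a b]; rewrite /cap_norm H0 // H1 // maxr_pMr.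
- move=> x y [a b] [c d]; rewrite /cap_norm ge_max; apply/andP; split.
  + by apply: le_trans (Tr0 _ _ a c) _; apply: lerD; apply: cn0_le_cap_norm.
  + by apply: le_trans (Tr1 _ _ b d) _; apply: lerD; apply: cn1_le_cap_norm.
Qed.

(* A Cauchy sequence of A0 /\ A1 converges in A0 and in A1; the two limits
   agree, and the common limit is the limit in A0 /\ A1. *)
Lemma cap_complete (C : couple R) : is_complete_on (cap_set C) (cap_norm C).
Proof.
move=> u uC Cau.
have Cau_le (n : cV C -> R) : (forall v, n v <= cap_norm C v) ->
    forall e : R, 0 < e -> exists N, forall p q, (N <= p)%N -> (N <= q)%N ->
      n (u p - u q) < e.
  move=> le_n e e0; have [N HN] := Cau e e0; exists N => p q Hp Hq.
  exact: le_lt_trans (le_n _) (HN p q Hp Hq).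
have uA0 k : cA0 C (u k) by case: (uC k).
have uA1 k : cA1 C (u k) by case: (uC k).
have [_ _ Cp0] := cA0_Banach _ C; have [_ _ Cp1] := cA1_Banach _ C.
have [l0 [L0 lim0]] := Cp0 u uA0 (Cau_le _ (@cn0_le_cap_norm C)).
have [l1 [L1 lim1]] := Cp1 u uA1 (Cau_le _ (@cn1_le_cap_norm C)).
have El := limits_agree uA0 uA1 L0 L1 lim0 lim1.
exists l0; split; first by split; rewrite // El.
move=> e e0; have [N0 HN0] := lim0 _ e0; have [N1 HN1] := lim1 _ e0.
exists (maxn N0 N1) => p hp; rewrite /cap_norm gt_max; apply/andP; split.
  by apply: HN0; apply: leq_trans hp; rewrite leq_maxl.
by rewrite El; apply: HN1; apply: leq_trans hp; rewrite leq_maxr.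
Qed.

Lemma cap_Banach (C : couple R) : is_Banach_on (cap_set C) (cap_norm C).
Proof. by split; [exact: cap_subspace | exact: cap_norm_on | exact: cap_complete]. Qed.

(* A0 /\ A1 embeds with norm <= 1 into A0 + A1 (decompose x = x + 0). *)
Lemma cap_sum_bounded (C : couple R) :
  bounded_between (cap_set C) (cap_norm C) setT (sum_norm C) id.
Proof.
split=> //; exists 1 => x [A0 _]; rewrite mul1r.
have S1 := Banach_subspace (cA1_Banach _ C).
apply: le_trans (_ : cn0 C x + cn1 C 0 <= _).
  by rewrite /= -{1}(addr0 x); apply: sum_norm_le_decomp => //; case: S1.
by rewrite (norm_at0 S1 (Banach_norm (cA1_Banach _ C))) addr0 cn0_le_cap_norm.
Qed.

Lemma operator_cap_bounded (A B : couple R) (T : {linear cV A -> cV B}) :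
  operator T -> bounded_between (cap_set A) (cap_norm A) (cap_set B) (cap_norm B) T.
Proof.
move=> [[T0 [c0 Hc0]] [T1 [c1 Hc1]]]; split.
  by move=> x [x0 x1]; split; [apply: T0 | apply: T1].
have [M M0 [c0M c1M]] := common_bound c0 c1.
exists M => x [x0 x1]; rewrite {1}/cap_norm ge_max; apply/andP; split.
- apply: le_trans (Hc0 x x0) _; apply: ler_bound (ltW M0) => //.
    exact: (norm_ge0 (Banach_norm (cA0_Banach _ A))).
  exact: cn0_le_cap_norm.
- apply: le_trans (Hc1 x x1) _; apply: ler_bound (ltW M0) => //.
    exact: (norm_ge0 (Banach_norm (cA1_Banach _ A))).
  exact: cn1_le_cap_norm.
Qed.

Definition cap_functor : interp_functor R :=
  @InterpFunctor R cap_set cap_norm cap_Banach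
    (fun C => id_bounded (cap_set C) (cap_norm C)) cap_sum_bounded
    operator_cap_bounded.

Lemma operator_sum_bounded (A B : couple R) (T : {linear cV A -> cV B}) :
  operator T -> bounded_between setT (sum_norm A) setT (sum_norm B) T.
Proof.
move=> [[T0 [c0 Hc0]] [T1 [c1 Hc1]]]; split=> //.
have [M M0 [c0M c1M]] := common_bound c0 c1.
exists M => x _; apply: sum_norm_le => // a0 a1 A0 A1 ->.
exists (T a0), (T a1); split; [exact: T0 | exact: T1 | by rewrite linearD |].
rewrite mulrDr; apply: lerD.
  apply: le_trans (Hc0 a0 A0) _; apply: ler_bound (ltW M0) => //.
  exact: (norm_ge0 (Banach_norm (cA0_Banach _ A))).
apply: le_trans (Hc1 a1 A1) _; apply: ler_bound (ltW M0) => //.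
exact: (norm_ge0 (Banach_norm (cA1_Banach _ A))).
Qed.

End SumAndIntersection.

Section InvertibleOperators.
Variables (R : realType) (A B : couple R) (T : {linear cV A -> cV B}).
Hypotheses
  (h0 : invertible_between (cA0 A) (cn0 A) (cA0 B) (cn0 B) T)
  (h1 : invertible_between (cA1 A) (cn1 A) (cA1 B) (cn1 B) T).

Lemma inverse_operator (S : {linear cV B -> cV A}) : cancel T S -> operator S.
Proof. by move=> TK; split; apply: left_inverse_bounded TK. Qed.

Lemma sum_surjective : forall y, exists x, T x = y.
Proof.
have [_ _ onto0 _] := h0; have [_ _ onto1 _] := h1.
move=> y; have [b0 [b1 [/onto0[x0 _ <-] /onto1[x1 _ <-] ->]]] := c_sum _ B y.
by exists (x0 + x1); rewrite linearD.
Qed.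

(* Condition (i) makes T injective on A0 + A1: if T (a0 + a1) = 0 then
   T a0 = T (- a1) lies in B0 /\ B1, so a0 = - a1 by (i). *)
Lemma sum_injective :
  (forall y, cA0 B y -> cA1 B y ->
     forall x0 x1, cA0 A x0 -> cA1 A x1 -> T x0 = y -> T x1 = y -> x0 = x1) ->
  injective T.
Proof.
move=> agree x y Exy; apply/eqP; rewrite -subr_eq0.
have [[TB0 _] _ _ _] := h0; have [[TB1 _] _ _ _] := h1.
have S1 := Banach_subspace (cA1_Banach _ A).
have [a0 [a1 [A0 A1 E]]] := c_sum _ A (x - y).
have T_sum0 : T (a0 + a1) = 0 by rewrite -E linearB Exy subrr.
have TE : T a0 = T (- a1) by apply/eqP; rewrite raddfN -addr_eq0 -linearD T_sum0.
rewrite E addr_eq0; apply/eqP; apply: (agree (T a0)) => //; first exact: TB0.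
  by rewrite TE; apply: TB1; exact: subspaceN.
exact: subspaceN.
Qed.

End InvertibleOperators.

Theorem proposition4p2 (R : realType) (A B : couple R)
  (T : {linear cV A -> cV B}) (hT : operator T)
  (h0 : invertible_between (cA0 A) (cn0 A) (cA0 B) (cn0 B) T)
  (h1 : invertible_between (cA1 A) (cn1 A) (cA1 B) (cn1 B) T) :
  [<-> (* (i) (T|A0)^-1 y = (T|A1)^-1 y for y in B0 /\ B1 *)
       (forall y, cA0 B y -> cA1 B y ->
          forall x0 x1, cA0 A x0 -> cA1 A x1 -> T x0 = y -> T x1 = y -> x0 = x1);
       (* (ii) T : A0 + A1 -> B0 + B1 invertible *)
       invertible_between setT (sum_norm A) setT (sum_norm B) T;
       (* (iii) T : G(A) -> G(B) invertible for every interpolation functor G *)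
       (forall G : interp_functor R,
          invertible_between (Gset G A) (Gnorm G A) (Gset G B) (Gnorm G B) T)].
Proof.
have T_onto := sum_surjective h0 h1.
tfae.
- move=> /(sum_injective h0 h1) T_inj.
  pose S := linear_inverse T_inj T_onto.
  have S_op : operator S := inverse_operator h0 h1 (linear_inverseKV T_inj T_onto).
  exact: (invertible_of_inverse (operator_sum_bounded hT) (operator_sum_bounded S_op)
    (linear_inverseKV T_inj T_onto) (linear_inverseK T_inj T_onto)).
- case=> _ T_inj _ _ G.
  have {}T_inj : injective T by move=> x y; apply: T_inj.
  pose S := linear_inverse T_inj T_onto.
  have S_op : operator S := inverse_operator h0 h1 (linear_inverseKV T_inj T_onto).
  exact: (invertible_of_inverse (G_interp _ G _ _ _ hT) (G_interp _ G _ _ _ S_op)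
    (linear_inverseKV T_inj T_onto) (linear_inverseK T_inj T_onto)).
- move=> /(_ (cap_functor R)) [_ _ cap_onto _] y B0 B1 x0 x1 A0 A1 E0 E1.
  have [_ inj0 _ _] := h0; have [_ inj1 _ _] := h1.
  have [x [xA0 xA1] Ex] := cap_onto y (conj B0 B1).
  have -> : x0 = x by apply: inj0 => //; rewrite E0 Ex.
  by apply: inj1 => //; rewrite E1 Ex.
Qed.
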